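(* Assuming $O(\log n)$-bit numerical precision, there exists an encoder-only Transformer $\mathcal E$ whose number of layers $L$ and embedding dimension $D$ are $O(1)$ (i.e. bounded by constants independent of $n$) such that $\mathcal E(x_1,\dots,x_m)_m = f_{\mathrm{TC}}(x_1,\dots,x_m)$ for every $m \le n$ and every sequence $(x_1,\dots,x_m)$ of integers with $0 \le x_i < m$ for all $i$.
   Context: The Triplet-Counting function is $f_{\mathrm{TC}}(x_1,\dots,x_n) = \big|\{(i,j) \in \{1,\dots,n\}^2 : x_i + x_j + x_n \equiv 0 \pmod n\}\big| \bmod n$. An encoder-only Transformer is a standard Transformer (token and positional embeddings, multi-head softmax attention without causal mask, so every position attends to all positions, residual connections, and token-wise MLPs with ReLU activations), and $\mathcal E(x_1,\dots,x_m)_m$ denotes its output at the last position $m$ on input $(x_1,\dots,x_m)$. *)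

From HB Require Import structures.
From mathcomp Require Import all_boot all_order all_algebra.
From mathcomp Require Import reals sequences exp.
Set Implicit Arguments. Unset Strict Implicit. Unset Printing Implicit Defensive.
Import Order.TTheory GRing.Theory Num.Theory.
Local Open Scope ring_scope.

(* Triplet counting.  The input (x_1,...,x_{m}) with m = k.+1 >= 1 is   *)
(* x : 'I_k.+1 -> nat (position i+1 of the paper is index i here); the  *)
(* last element x_m is x ord_max, and the modulus is the length m.      *)
Definition fTC (k : nat) (x : 'I_k.+1 -> nat) : nat :=
  #|[set ij : 'I_k.+1 * 'I_k.+1 |
       ((x ij.1 + x ij.2 + x ord_max) %% k.+1 == 0)%N]| %% k.+1.

Section Transformer.
Variable R : realType.

(* p-bit fixed-point arithmetic: the representable numbers are z/2^p    *)
(* (z integer) in [-2^p, 2^p]  (p integer bits + p fractional bits).   *)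
Definition rnd (p : nat) (x : R) : R :=
  let s : R := (2 ^ p)%:R in
  Num.max (- s) (Num.min s ((Num.floor (x * s))%:~R / s)).

Definition representable (p : nat) (x : R) : bool := rnd p x == x.

Definition rndm (p : nat) {a b : nat} (M : 'M[R]_(a, b)) : 'M[R]_(a, b) :=
  map_mx (rnd p) M.

Definition relu (x : R) : R := Num.max x 0.

Record layer (D H dh W : nat) := Layer {
  WQ : 'I_H -> 'M[R]_(D, dh);
  WK : 'I_H -> 'M[R]_(D, dh);
  WV : 'I_H -> 'M[R]_(D, dh);
  WO : 'I_H -> 'M[R]_(dh, D);
  W1 : 'M[R]_(D, W);
  b1 : 'rV[R]_W;
  W2 : 'M[R]_(W, D);
  b2 : 'rV[R]_D }.

Record transformer (D H dh W : nat) := Transformer {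
  tok : nat -> 'rV[R]_D;
  pos : nat -> 'rV[R]_D;        (* positional embedding (0-indexed) *)
  layers : seq (layer D H dh W);
  wout : 'rV[R]_D;
  bout : R }.

Definition nlayers D H dh W (T : transformer D H dh W) : nat := size (layers T).

Definition bcast {m n : nat} (b : 'rV[R]_n) : 'M[R]_(m, n) :=
  \matrix_(i < m, j < n) b 0 j.

Definition head (p : nat) {m D dh : nat} (Q K V : 'M[R]_(D, dh))
    (X : 'M[R]_(m, D)) : 'M[R]_(m, dh) :=
  let q := rndm p (X *m Q) in
  let k := rndm p (X *m K) in
  let v := rndm p (X *m V) in
  let S := rndm p (q *m k^T) in
  let E := map_mx (fun s => rnd p (expR s)) S in
  let Z := fun i : 'I_m => rnd p (\sum_(j < m) E i j) in
  let A := \matrix_(i < m, j < m) rnd p (E i j / Z i) in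
  rndm p (A *m v).

Definition layer_apply (p : nat) {m D H dh W : nat} (l : layer D H dh W)
    (X : 'M[R]_(m, D)) : 'M[R]_(m, D) :=
  let attn := rndm p (\sum_(h < H) rndm p (head p (WQ l h) (WK l h) (WV l h) X
                                           *m WO l h)) in
  let X1 := rndm p (X + attn) in
  let Hd := map_mx (fun y => rnd p (relu y)) (rndm p (X1 *m W1 l + bcast (b1 l))) in
  let F := rndm p (Hd *m W2 l + bcast (b2 l)) in
  rndm p (X1 + F).

Definition embed (p : nat) {D H dh W : nat} (T : transformer D H dh W)
    {m : nat} (x : 'I_m -> nat) : 'M[R]_(m, D) :=
  \matrix_(i < m, j < D) rnd p (tok T (x i) 0 j + pos T i 0 j).

Definition final_states (p : nat) {D H dh W : nat} (T : transformer D H dh W)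
    {m : nat} (x : 'I_m -> nat) : 'M[R]_(m, D) :=
  foldl (fun X l => layer_apply p l X) (embed p T x) (layers T).

(* E(x_1,...,x_m)_m : the (read-out) output at the last position m.   *)
Definition eval_last (p : nat) {D H dh W : nat} (T : transformer D H dh W)
    {k : nat} (x : 'I_k.+1 -> nat) : R :=
  rnd p ((row ord_max (final_states p T x) *m (wout T)^T) 0 0 + bout T).

Definition all_layers {A : Type} (P : A -> Prop) (s : seq A) : Prop :=
  foldr (fun a acc => P a /\ acc) True s.

Definition layer_representable (p : nat) {D H dh W : nat}
    (l : layer D H dh W) : Prop :=
        [/\ forall h a b, representable p (WQ l h a b),
            forall h a b, representable p (WK l h a b),
            forall h a b, representable p (WV l h a b) &
            forall h a b, representable p (WO l h a b)] /\
        [/\ forall a b, representable p (W1 l a b),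
            forall b, representable p (b1 l 0 b),
            forall a b, representable p (W2 l a b) &
            forall b, representable p (b2 l 0 b)].

Definition params_representable (p : nat) {D H dh W : nat}
    (T : transformer D H dh W) : Prop :=
  [/\ forall t j, representable p (tok T t 0 j),
      forall t j, representable p (pos T t 0 j),
      forall j, representable p (wout T 0 j),
      representable p (bout T) &
      all_layers (layer_representable p) (layers T)].

End Transformer.

(* With saturating p-bit arithmetic, a softmax head whose scores are all +-2^p is a hard
   selector returning the SUM, not the average, of the selected values: exp rounds to 2^p or
   to 0 and the normaliser saturates at 2^p.  So a one-head layer can add to one coordinate of
   the residual stream the sum of another coordinate over the positions j passing a linear
   threshold test against position i.  Eleven such layers compute, at every position i, the
   length m, the last token x_m and (i+1)m; then, since for s = x_i + x_j + x_m < 3m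
   [m | s] = sum_(t<6) (-1)^t [t/2 * m + (t mod 2) <= s], six layers compute
   c_i = #{j | m divides x_i + x_j + x_m}; one more sums N = sum_i c_i, and a last one gets
   m * (N div m) by counting the j with (j+1)m <= N.  The read-out returns N mod m.  Every
   intermediate value is an integer of size O(m^2), so with 2^a >= 64 m^2 and p = 2a nothing
   is ever rounded, and a = O(log n). *)

From Pilot Require Import Defs.
From HB Require Import structures.
From mathcomp Require Import all_boot all_order all_algebra.
From mathcomp Require Import reals sequences exp.
From mathcomp Require Import ring lra zify.
Import Order.TTheory GRing.Theory Num.Theory.
Local Open Scope ring_scope.

Section Rounding.
Variables (R : realType) (p : nat).
Local Notation s := ((2 ^ p)%:R : R).

Lemma scale_gt0 : 0 < s. Proof. by rewrite ltr0n expn_gt0. Qed.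

Lemma scale_ge1 : 1 <= s. Proof. by rewrite ler1n expn_gt0. Qed.

Lemma rnd_id (z : R) : z \is a Num.int -> `|z| <= s -> rnd p z = z.
Proof.
move=> zi; rewrite ler_norml => /andP[zlo zhi]; rewrite /rnd.
have zsi : z * s \is a Num.int by rewrite rpredM // rpred_nat.
by rewrite (floorK zsi) mulfK ?gt_eqF ?scale_gt0 // (min_r zhi) (max_r zlo).
Qed.

Lemma representable_int (z : R) : z \is a Num.int -> `|z| <= s -> representable p z.
Proof. by move=> zi zs; apply/eqP/rnd_id. Qed.

Lemma rndm_id a b (A : 'M[R]_(a, b)) :
  (forall i j, A i j \is a Num.int) -> (forall i j, `|A i j| <= s) -> rndm p A = A.
Proof. by move=> Aint Ab; apply/matrixP => i j; rewrite mxE rnd_id. Qed.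

Lemma rnd_ge (x : R) : s <= x -> rnd p x = s.
Proof.
move=> sx; rewrite /rnd; have s_gt0 := scale_gt0.
have ssi : s * s \is a Num.int by rewrite rpredM // rpred_nat.
have ss_le : s * s <= (Num.floor (x * s))%:~R.
  by rewrite -(floorK ssi) ler_int le_floor // ler_wpM2r // ltW.
have s_le : s <= (Num.floor (x * s))%:~R / s by rewrite ler_pdivlMr.
by rewrite (min_l s_le) max_r //; lra.
Qed.

Lemma rnd_le (x : R) : x <= - s -> rnd p x = - s.
Proof.
move=> xs; rewrite /rnd; have s_gt0 := scale_gt0.
have le_ss : (Num.floor (x * s))%:~R <= - (s * s).
  by apply: le_trans (floor_le _) _; rewrite -mulNr ler_wpM2r // ltW.
have le_s : (Num.floor (x * s))%:~R / s <= - s by rewrite ler_pdivrMr // mulNr.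
by rewrite min_r ?max_l //; lra.
Qed.

Lemma rnd_expR_scale : rnd p (expR s) = s.
Proof. by apply: rnd_ge; apply: le_trans (expR_ge1Dx _); lra. Qed.

Lemma rnd_expR_Nscale : rnd p (expR (- s)) = 0.
Proof.
rewrite /rnd; have s_gt0 := scale_gt0.
have e_lt1 : expR (- s) * s < 1.
  rewrite expRN -ltr_pdivlMl ?invr_gt0 ?expR_gt0 // invrK mulr1.
  by apply: lt_le_trans (expR_ge1Dx _); lra.
have -> : Num.floor (expR (- s) * s) = 0.
  by apply/eqP; rewrite floor_eq add0r e_lt1 mulr_ge0 // ltW ?expR_gt0.
by rewrite mul0r min_r ?max_r //; lra.
Qed.

End Rounding.

Lemma sum_mul_delta (R : pzSemiRingType) n (F : 'I_n -> R) k :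
  \sum_(d < n) F d * (d == k)%:R = F k.
Proof.
by rewrite (bigD1 k) //= eqxx mulr1 big1 ?addr0 // => d /negbTE ->; rewrite mulr0.
Qed.

Section SelectLayer.
Variables (R : realType) (a D : nat).
Variables (eps c : int) (qf : seq (int * 'I_D.+1)) (w src dst : 'I_D.+1).
Local Notation B := ((2 ^ a)%:R : R).
Local Notation s := ((2 ^ (2 * a))%:R : R).

(* Query (B qform i, B eps) and key (B, 2 B X_j w) give the score
   B^2 (qform i + 2 eps X_j w); the value X_j src is added, times c, to coordinate dst. *)
Definition select_Q : 'M[R]_(D.+1, 2) := \matrix_(d, e)
  if val e == 0%N then B * \sum_(t <- qf) t.1%:~R * (d == t.2)%:R
  else if d == ord0 then B * eps%:~R else 0.

Definition select_K : 'M[R]_(D.+1, 2) := \matrix_(d, e)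
  if val e == 0%N then (if d == ord0 then B else 0)
  else if d == w then 2 * B else 0.

Definition select_V : 'M[R]_(D.+1, 2) := \matrix_(d, e)
  ((val e == 0%N) && (d == src))%:R.

Definition select_O : 'M[R]_(2, D.+1) := \matrix_(e, d)
  if (val e == 0%N) && (d == dst) then c%:~R else 0.

Definition select_layer : layer R D.+1 1 2 0 :=
  Layer (fun _ => select_Q) (fun _ => select_K) (fun _ => select_V) (fun _ => select_O)
    0 0 0 0.

Lemma B_sq : B * B = s.
Proof. by rewrite -natrM -expnD addnn mul2n. Qed.

Lemma B_ge1 : 1 <= B.
Proof. exact: scale_ge1. Qed.

Lemma norm_cast_sign : (`|c| = 1)%N -> `|c%:~R : R| = 1.
Proof. by move=> c1; rewrite -intr_norm -natr_absz c1. Qed.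

Lemma mulB_le (z : R) : `|z| <= B -> `|B * z| <= s.
Proof. by move=> zB; rewrite -B_sq normrM ger0_norm ?ler0n // ler_pM2l ?ltr0n ?expn_gt0. Qed.

Lemma le_B_scale (z : R) : `|z| <= B -> `|z| <= s.
Proof. by move=> zB; apply: le_trans zB _; rewrite -B_sq ler_peMr ?ler0n ?B_ge1. Qed.

Variable K : nat.
Hypothesis eps_le : (`|eps| <= 2 ^ a)%N.
Hypothesis c_sign : (`|c| = 1)%N.
Hypothesis qf_le : (\sum_(t <- qf) `|t.1| <= K)%N.

Lemma eps_le_B : `|eps%:~R : R| <= B.
Proof. by rewrite -intr_norm -natr_absz ler_nat. Qed.

Lemma select_layer_representable :
  (1 <= a)%N -> (K <= 2 ^ a)%N -> layer_representable (2 * a) select_layer.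
Proof.
move=> a_ge1 K_le.
have rep0 : representable (2 * a) (0 : R) by rewrite representable_int ?normr0 ?ler0n.
have qf_delta_le (d : 'I_D.+1) : `|\sum_(t <- qf) t.1%:~R * (d == t.2)%:R| <= B.
  apply: le_trans (ler_norm_sum _ _ _) _.
  apply: (@le_trans _ _ (\sum_(t <- qf) `|t.1|)%N%:R); last by rewrite ler_nat (leq_trans qf_le).
  rewrite natr_sum ler_sum // => t _; rewrite normrM normr_nat natr_absz intr_norm.
  by case: (d == t.2); rewrite ?mulr1 ?mulr0.
have two_le_B : `|2 : R| <= B.
  by rewrite normr_nat (ler_nat _ 2) -[2%N]/(2 ^ 1)%N leq_exp2l.
split; last by split=> *; rewrite ?mxE.
split=> h d e; rewrite mxE.
- case: ifP => _; [|case: ifP => _] => //; apply: representable_int;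
    rewrite ?rpredM ?rpred_sum ?intr_int ?rpred_nat ?mulB_le ?eps_le_B // => t _.
  by rewrite rpredM ?intr_int ?rpred_nat.
- case: ifP => _; case: ifP => _ //; apply: representable_int; rewrite ?rpredM ?rpred_nat //.
  + by rewrite le_B_scale ?normr_nat.
  + by rewrite mulrC mulB_le.
- apply: representable_int; rewrite ?rpred_nat // normr_nat.
  by apply: le_trans (scale_ge1 _ _); rewrite lern1 leq_b1.
- case: ifP => _ //; apply: representable_int; rewrite ?intr_int //.
  by rewrite norm_cast_sign // scale_ge1.
Qed.

Section Apply.
Variables (m : nat) (X : 'M[R]_(m, D.+1)).

Definition qform i := \sum_(t <- qf) t.1%:~R * X i t.2.
Definition score i j := qform i + 2 * eps%:~R * X j w.
Definition selected_sum i := \sum_(j | 0 < score i j) X j src.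

Variables (M : nat) (Y : 'M[R]_(m, D.+1)).
Hypothesis KM_le : (K * M <= 2 ^ a)%N.
Hypothesis M2_le : (2 * M <= 2 ^ a)%N.
Hypothesis X_int : forall i d, X i d \is a Num.int.
Hypothesis X_le : forall i d, `|X i d| <= M%:R.
Hypothesis X_ord0 : forall i, X i ord0 = 1.
Hypothesis score_neq0 : forall i j, score i j != 0.
Hypothesis Y_le : forall i d, `|Y i d| <= M%:R.
Hypothesis YE : forall i d, Y i d = X i d + (d == dst)%:R * (c%:~R * selected_sum i).

Lemma M_le_B : M%:R <= B.
Proof. by rewrite ler_nat; lia. Qed.

Lemma qform_int i : qform i \is a Num.int.
Proof. by rewrite rpred_sum // => t _; rewrite rpredM ?intr_int. Qed.

Lemma qform_le i : `|qform i| <= B.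
Proof.
apply: le_trans (ler_norm_sum _ _ _) _.
apply: (@le_trans _ _ ((\sum_(t <- qf) `|t.1|)%N%:R * M%:R)); last first.
  by rewrite -natrM ler_nat (leq_trans _ KM_le) // leq_mul2r qf_le orbT.
rewrite natr_sum mulr_suml ler_sum // => t _.
by rewrite normrM natr_absz intr_norm ler_wpM2l.
Qed.

Lemma selected_sum_int i : selected_sum i \is a Num.int.
Proof. exact: rpred_sum. Qed.

Lemma selected_sum_le i : `|selected_sum i| <= B.
Proof.
have -> : `|selected_sum i| = `|c%:~R * selected_sum i|.
  by rewrite normrM norm_cast_sign // mul1r.
have -> : c%:~R * selected_sum i = Y i dst - X i dst by rewrite YE eqxx mul1r addrC addKr.
apply: le_trans (ler_normB _ _) _; apply: (@le_trans _ _ (2 * M)%:R).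
  by rewrite natrM mulr_natl mulr2n lerD.
by rewrite ler_nat.
Qed.

Lemma query_mxE :
  X *m select_Q = \matrix_(i, e) (if val e == 0%N then B * qform i else B * eps%:~R).
Proof.
apply/matrixP => i e; rewrite !mxE; under eq_bigr do rewrite mxE.
case: (val e == 0%N).
  under eq_bigr do rewrite mulrCA.
  rewrite -mulr_sumr; congr (_ * _).
  under eq_bigr do rewrite big_distrr /=.
  rewrite exchange_big /qform; apply: eq_bigr => t _ /=.
  by under eq_bigr do rewrite mulrCA; rewrite -mulr_sumr sum_mul_delta mulrC.
rewrite (bigD1 ord0) //= X_ord0 mul1r big1 ?addr0 // => d /negbTE ->.
by rewrite mulr0.
Qed.

Lemma key_mxE :
  X *m select_K = \matrix_(j, e) (if val e == 0%N then B else 2 * B * X j w).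
Proof.
apply/matrixP => j e; rewrite !mxE; under eq_bigr do rewrite mxE.
case: (val e == 0%N).
  by rewrite (bigD1 ord0) //= X_ord0 mul1r big1 ?addr0 // => d /negbTE ->; rewrite mulr0.
by rewrite (bigD1 w) //= eqxx mulrC big1 ?addr0 // => d /negbTE ->; rewrite mulr0.
Qed.

Lemma value_mxE : X *m select_V = \matrix_(j, e) (if val e == 0%N then X j src else 0).
Proof.
apply/matrixP => j e; rewrite !mxE; under eq_bigr do rewrite mxE.
case: (val e == 0%N); last by rewrite big1 // => d _; rewrite mulr0.
exact: sum_mul_delta.
Qed.

Lemma score_int i j : score i j \is a Num.int.
Proof. by rewrite rpredD ?qform_int // !rpredM ?intr_int ?rpred_nat. Qed.

(* Each score is s * score i j with score i j a nonzero integer, so it saturates. *)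
Lemma attention_scoresE :
  rndm (2 * a) ((X *m select_Q) *m (X *m select_K)^T) =
  \matrix_(i, j) (if 0 < score i j then s else - s).
Proof.
apply/matrixP => i j; rewrite query_mxE key_mxE !mxE big_ord_recr big_ord1 /= !mxE /=.
have -> : B * qform i * B + B * eps%:~R * (2 * B * X j w) = s * score i j.
  by rewrite -B_sq /score; ring.
have s_gt0 : 0 < s := scale_gt0 R (2 * a).
have score_ge1 := norm_intr_ge1 (score_int i j) (score_neq0 i j).
case: ifP => [score_gt0|/negbT]; first by rewrite rnd_ge // ler_peMr // -[score _ _]gtr0_norm.
rewrite -leNgt => score_le0; rewrite rnd_le // -mulrN1 ler_pM2l //.
by rewrite ler0_norm // in score_ge1; lra.
Qed.

Lemma query_exact : rndm (2 * a) (X *m select_Q) = X *m select_Q.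
Proof.
apply: rndm_id => i e; rewrite query_mxE mxE; case: ifP => _;
  by rewrite ?rpredM ?qform_int ?intr_int ?rpred_nat ?mulB_le ?qform_le ?eps_le_B.
Qed.

Lemma key_exact : rndm (2 * a) (X *m select_K) = X *m select_K.
Proof.
have X2_le j : `|2 * X j w| <= B.
  rewrite normrM normr_nat; apply: le_trans (_ : (2 * M)%:R <= B); last by rewrite ler_nat.
  by rewrite natrM ler_wpM2l.
apply: rndm_id => j e; rewrite key_mxE mxE; case: ifP => _.
- by rewrite rpred_nat.
- by rewrite !rpredM ?rpred_nat.
- by rewrite le_B_scale ?normr_nat.
- by rewrite -mulrA mulrCA mulB_le.
Qed.

Lemma value_exact : rndm (2 * a) (X *m select_V) = X *m select_V.
Proof.
apply: rndm_id => j e; rewrite value_mxE mxE; case: ifP => _ //.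
- exact/le_B_scale/(le_trans (X_le _ _))/M_le_B.
- by rewrite normr0 ler0n.
Qed.

Lemma head_selectE :
  Defs.head (2 * a) select_Q select_K select_V X =
  \matrix_(i, e) (if val e == 0%N then selected_sum i else 0).
Proof.
have s_gt0 : 0 < s := scale_gt0 R (2 * a).
rewrite /Defs.head query_exact key_exact value_exact attention_scoresE /=.
set E := map_mx _ _.
have EE : E = \matrix_(i, j) (if 0 < score i j then s else 0).
  by apply/matrixP => i j; rewrite !mxE; case: ifP; rewrite ?rnd_expR_scale ?rnd_expR_Nscale.
have AE : \matrix_(i, j) rnd (2 * a) (E i j / rnd (2 * a) (\sum_(j0 < m) E i j0)) =
          \matrix_(i, j) (if 0 < score i j then 1 else 0).
  apply/matrixP => i j; rewrite EE !mxE; case: ifP => sel; last first.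
    by rewrite mul0r rnd_id ?normr0 ?ler0n //; apply: rpred0.
  rewrite [X in _ / X]rnd_ge; last first.
    rewrite (bigD1 j) //= mxE sel lerDl sumr_ge0 // => k _.
    by rewrite mxE; case: ifP; rewrite ?ler0n.
  by rewrite divff ?gt_eqF // rnd_id ?normr1 ?scale_ge1.
have sumE : \matrix_(i, j) (if 0 < score i j then 1 else 0) *m (X *m select_V) =
            \matrix_(i, e) (if val e == 0%N then selected_sum i else 0).
  apply/matrixP => i e; rewrite value_mxE !mxE; under eq_bigr do rewrite !mxE.
  case: (val e == 0%N); last by rewrite big1 // => j _; rewrite mulr0.
  rewrite /selected_sum [RHS]big_mkcond /=; apply: eq_bigr => j _.
  by case: ifP; rewrite ?mul1r ?mul0r.
rewrite AE sumE; apply: rndm_id => i e; rewrite mxE; case: ifP => _ //.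
- exact: selected_sum_int.
- exact/le_B_scale/selected_sum_le.
- by rewrite normr0 ler0n.
Qed.

Lemma select_layerE : layer_apply (2 * a) select_layer X = Y.
Proof.
have exact_mx (A : 'M[R]_(m, D.+1)) :
    (forall i d, A i d \is a Num.int) -> (forall i d, `|A i d| <= B) -> rndm (2 * a) A = A.
  by move=> Aint Ab; apply: rndm_id => // i d; apply: le_B_scale.
set U := \matrix_(i, d) ((d == dst)%:R * (c%:~R * selected_sum i)) : 'M[R]_(m, D.+1).
have U_int i d : U i d \is a Num.int.
  by rewrite mxE rpredM ?rpred_nat // rpredM ?intr_int ?selected_sum_int.
have U_le i d : `|U i d| <= B.
  rewrite mxE normrM normr_nat normrM norm_cast_sign // mul1r.
  by case: (d == dst); rewrite ?mul1r ?selected_sum_le // mul0r ler0n.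
have YXU : Y = X + U by apply/matrixP => i d; rewrite YE !mxE.
have Y_int i d : Y i d \is a Num.int by rewrite YXU mxE rpredD.
have Y_le_B i d : `|Y i d| <= B := le_trans (Y_le i d) M_le_B.
have headOE : \matrix_(i, e) (if val e == 0%N then selected_sum i else 0) *m select_O = U.
  apply/matrixP => i d; rewrite !mxE big_ord_recr big_ord1 /= !mxE /= mulr0 addr0.
  by case: (d == dst); rewrite ?mul1r ?mul0r ?mulr0 // mulrC.
have mlp0 (H : 'M[R]_(m, 0)) : rndm (2 * a) (H *m 0 + bcast (0 : 'rV[R]_D.+1)) = 0.
  by apply/matrixP => i d; rewrite !mxE big_ord0 add0r rnd_id ?normr0 ?ler0n //; apply: rpred0.
rewrite /layer_apply /= big_ord1 head_selectE headOE !(exact_mx U) // -YXU.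
by rewrite (exact_mx Y) // mlp0 addr0 (exact_mx Y).
Qed.

End Apply.
End SelectLayer.

Arguments select_layer {R} a {D} eps c qf w src dst.
Arguments qform {R D} qf {m} X i.
Arguments score {R D} eps qf w {m} X i j.
Arguments selected_sum {R D} eps qf w src {m} X i.

Lemma odd_sub_even_neq0 (R : numDomainType) (al be : nat) :
  ((2 * al + 1)%:R - (2 * be)%:R : R) != 0.
Proof.
rewrite subr_eq0 eqr_nat; apply/eqP => /(congr1 odd).
by rewrite oddD !mul2n !odd_double.
Qed.

Lemma odd_sub_even_gt0 (R : numDomainType) (al be : nat) :
  (0 < ((2 * al + 1)%:R - (2 * be)%:R : R)) = (be <= al)%N.
Proof. by rewrite subr_gt0 ltr_nat; apply/idP/idP => h; lia. Qed.

(* With [s < 3m], [m %| s] means [s = 0, m] or [2m], and [(k <= s) - (k+1 <= s) = (s == k)]. *)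
Lemma mod_eq0_alternating (R : comPzRingType) (m s : nat) : (0 < m)%N -> (s < 3 * m)%N ->
  ((s %% m == 0)%N%:R : R) = \sum_(t < 6) (-1) ^+ t * (t./2 * m + odd t <= s)%N%:R.
Proof.
move=> m_gt0 s_lt.
have incl_excl : (1 + (m <= s) + (2 * m <= s) =
    (1 <= s) + (m + 1 <= s) + (2 * m + 1 <= s) + (s %% m == 0))%N.
  case: (ltnP s m) => [s_lt_m|m_le_s]; first by rewrite modn_small //; lia.
  case: (ltnP s (2 * m)) => [s_lt_2m|le_2m_s].
    have -> : (s %% m = s - m)%N.
      by rewrite -{1}(subnKC m_le_s) -{1}(mul1n m) modnMDl modn_small //; lia.
    lia.
  have -> : (s %% m = s - 2 * m)%N by rewrite -{1}(subnKC le_2m_s) modnMDl modn_small //; lia.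
  lia.
have := congr1 (fun n => n%:R : R) incl_excl; rewrite !natrD /= => castE.
rewrite !big_ord_recl big_ord0 /= !mul0n !mul1n !addn0 !add0n.
have -> : ((s %% m == 0)%N%:R : R) = (1 + (m <= s)%N%:R + (2 * m <= s)%N%:R)
    - ((1 <= s)%N%:R + (m + 1 <= s)%N%:R + (2 * m + 1 <= s)%N%:R).
  by rewrite castE; ring.
ring.
Qed.

Definition one_coord : 'I_9 := ord0.
Definition pos_coord : 'I_9 := @Ordinal 9 1 isT.
Definition tok_coord : 'I_9 := @Ordinal 9 2 isT.
Definition len_coord : 'I_9 := @Ordinal 9 3 isT.
Definition last_coord : 'I_9 := @Ordinal 9 4 isT.
Definition prefix_coord : 'I_9 := @Ordinal 9 5 isT.
Definition count_coord : 'I_9 := @Ordinal 9 6 isT.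
Definition total_coord : 'I_9 := @Ordinal 9 7 isT.
Definition floor_coord : 'I_9 := @Ordinal 9 8 isT.

Section Construction.
Variables (R : realType) (a : nat).

Definition len_layer : layer R 9 1 2 0 :=
  select_layer a 0 1 [:: (1, one_coord)] one_coord one_coord len_coord.
Definition last_layer : layer R 9 1 2 0 :=
  select_layer a 1 1 [:: (3, one_coord); (-2, len_coord)] pos_coord tok_coord last_coord.
Definition prefix_layer : layer R 9 1 2 0 :=
  select_layer a (-1) 1 [:: (2, pos_coord); (1, one_coord)] pos_coord len_coord prefix_coord.
Definition count_layer (t : nat) : layer R 9 1 2 0 :=
  select_layer a 1 ((-1) ^+ t)
    [:: (2, tok_coord); (2, last_coord); (- (2 * t./2)%:Z, len_coord); ((-1) ^+ t, one_coord)]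
    tok_coord one_coord count_coord.
Definition total_layer : layer R 9 1 2 0 :=
  select_layer a 0 1 [:: (1, one_coord)] one_coord count_coord total_coord.
Definition floor_layer : layer R 9 1 2 0 :=
  select_layer a (-1) 1 [:: (2, total_coord); (1, one_coord)] prefix_coord len_coord floor_coord.

Definition tc_layers : seq (layer R 9 1 2 0) :=
  [:: len_layer; last_layer; prefix_layer] ++ map count_layer (iota 0 6) ++
  [:: total_layer; floor_layer].

(* Clamped so that every token and position embedding is representable. *)
Definition tc_tok (v : nat) : 'rV[R]_9 :=
  \row_(d < 9) if d == tok_coord then (minn v (2 ^ (2 * a)))%:R else 0.
Definition tc_pos (i : nat) : 'rV[R]_9 :=
  \row_(d < 9) if d == one_coord then 1
               else if d == pos_coord then (minn i (2 ^ (2 * a)))%:R else 0.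
Definition tc_out : 'rV[R]_9 :=
  \row_(d < 9) if d == total_coord then 1 else if d == floor_coord then -1 else 0.

Definition tc_transformer : transformer R 9 1 2 0 :=
  Transformer tc_tok tc_pos tc_layers tc_out 0.

Lemma params_representable_tc : (9 <= 2 ^ a)%N -> params_representable (2 * a) tc_transformer.
Proof.
move=> a_ge.
have a_gt0 : (0 < a)%N by case: a a_ge.
have rep0 : representable (2 * a) (0 : R) by rewrite representable_int ?normr0.
have rep1 : representable (2 * a) (1 : R) by rewrite representable_int ?normr1 ?scale_ge1.
have repN1 : representable (2 * a) (-1 : R).
  by rewrite representable_int ?rpredN ?rpred1 ?normrN ?normr1 ?scale_ge1.
have rep_min n : representable (2 * a) ((minn n (2 ^ (2 * a)))%:R : R).
  by apply: representable_int; rewrite ?rpred_nat // normr_nat ler_nat geq_minr.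
have rep_layer eps c qf w src dst : (`|eps| <= 1)%N -> (`|c| = 1)%N ->
    (sumn [seq `|t.1| | t <- qf] <= 9)%N ->
    layer_representable (2 * a) (select_layer a eps c qf w src dst : layer R 9 1 2 0).
  move=> eps_le c_sign qf_le.
  apply: (@select_layer_representable R a 8 eps c qf w src dst 9) => //.
  - by apply: leq_trans eps_le _; rewrite expn_gt0.
  - by rewrite sumnE big_map in qf_le.
split=> [v d|i d|d||]; rewrite ?mxE.
- by case: ifP => _; rewrite ?rep_min.
- by case: ifP => _; [|case: ifP => _]; rewrite ?rep_min.
- by case: ifP => _; [|case: ifP => _].
- by [].
by rewrite /all_layers /=; do 11!(split; first by apply: rep_layer).
Qed.

Variables (k : nat) (x : 'I_k.+1 -> nat).
Hypothesis x_lt : forall i, (x i < k.+1)%N.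
Hypothesis a_large : (64 * (k.+1 * k.+1) <= 2 ^ a)%N.
Local Notation m := k.+1.
Local Notation xl := (x ord_max).

Definition triple (i j : 'I_m) : nat := x i + x j + xl.
Definition threshold (t : nat) : nat := t./2 * m + odd t.
Definition count_from (i : 'I_m) (t : nat) : nat := (\sum_(j | threshold t <= triple i j) 1)%N.
Definition alt_count (h : nat) (i : 'I_m) : R :=
  \sum_(t < h) (-1) ^+ t * (count_from i t)%:R.
Definition ntriples : nat := (\sum_i \sum_(j | triple i j %% m == 0) 1)%N.

(* Entry [d] of position [i] of the residual stream after [lv] layers, with [d] numbered as
   [one_coord], ..., [floor_coord]. *)
Definition state_entry (lv : nat) (i : 'I_m) (d : 'I_9) : R :=
  match val d with
  | 0 => 1
  | 1 => i%:R
  | 2 => (x i)%:R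
  | 3 => if (1 <= lv)%N then m%:R else 0
  | 4 => if (2 <= lv)%N then xl%:R else 0
  | 5 => if (3 <= lv)%N then (i.+1 * m)%:R else 0
  | 6 => alt_count (minn (lv - 3) 6) i
  | 7 => if (10 <= lv)%N then ntriples%:R else 0
  | 8 => if (11 <= lv)%N then (m * (ntriples %/ m))%:R else 0
  | _ => 0
  end.

Definition state (lv : nat) : 'M[R]_(m, 9) := \matrix_(i, d) state_entry lv i d.

Lemma count_le (P : pred 'I_m) : (\sum_(j | P j) 1 <= m)%N.
Proof. by rewrite sum1_card -[X in (_ <= X)%N]card_ord max_card. Qed.

Lemma ntriples_le : (ntriples <= m * m)%N.
Proof.
apply: (@leq_trans (\sum_(i < m) m)); first by apply: leq_sum => i _; exact: count_le.
by rewrite sum_nat_const card_ord.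
Qed.

Lemma alt_count_int h i : alt_count h i \is a Num.int.
Proof. by rewrite rpred_sum // => t _; rewrite rpredM ?rpredX ?rpredN ?rpred1 ?rpred_nat. Qed.

Lemma alt_count_le h i : (h <= 6)%N -> `|alt_count h i| <= (6 * m)%:R.
Proof.
move=> h_le; apply: le_trans (ler_norm_sum _ _ _) _.
apply: (@le_trans _ _ (\sum_(t < h) (m%:R : R))).
  apply: ler_sum => t _; rewrite normrM normr_nat normrX normrN normr1 expr1n mul1r.
  by rewrite ler_nat count_le.
by rewrite sumr_const card_ord -mulrnA ler_nat; nia.
Qed.

Ltac case9 d := case: d => [[|[|[|[|[|[|[|[|[|?]]]]]]]]] ?] /=.

Lemma state_int lv i d : state lv i d \is a Num.int.
Proof.
rewrite mxE /state_entry; case9 d; rewrite ?rpred_nat ?alt_count_int ?rpred1 ?rpred0 //;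
  by case: ifP; rewrite ?rpred_nat ?rpred0.
Qed.

Lemma state_le lv i d : `|state lv i d| <= (6 * (m * m))%:R.
Proof.
have nat_le n : (n <= 6 * (m * m))%N -> `|n%:R : R| <= (6 * (m * m))%:R.
  by move=> n_le; rewrite normr_nat ler_nat.
have zero_le : `|0 : R| <= (6 * (m * m))%:R by rewrite normr0 ler0n.
have := ltn_ord i; have := x_lt i; have := x_lt ord_max; have := ntriples_le.
rewrite mxE /state_entry; case9 d => *; rewrite ?nat_le //; try nia;
  try by case: ifP => _; rewrite ?nat_le //; nia.
- by rewrite normr1 ler1n; nia.
- by apply: le_trans (alt_count_le _ _ (geq_minr _ _)) _; rewrite ler_nat; nia.
Qed.

Lemma state_one lv i : state lv i one_coord = 1.
Proof. by rewrite mxE. Qed.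

(* A score (2 al + 1) - 2 be is never 0, and it selects exactly the j with be <= al. *)
Lemma state_step lv {eps c : int} {qf : seq (int * 'I_9)} {w src dst : 'I_9}
    (al be : 'I_m -> 'I_m -> nat) :
  (`|eps| <= 1)%N -> (`|c| = 1)%N -> (sumn [seq `|t.1| | t <- qf] <= 9)%N ->
  (forall i j, score eps qf w (state lv) i j = (2 * al i j + 1)%:R - (2 * be i j)%:R) ->
  (forall i d, state_entry lv.+1 i d = state_entry lv i d +
     (d == dst)%:R * (c%:~R * \sum_(j | (be i j <= al i j)%N) state_entry lv j src)) ->
  layer_apply (2 * a) (select_layer a eps c qf w src dst) (state lv) = state lv.+1.
Proof.
move=> eps_le c_sign qf_le scoreE updateE.
apply: (@select_layerE R a 8 eps c qf w src dst 9 _ _ _ m (state lv) (6 * (m * m))) => //.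
- by apply: leq_trans eps_le _; rewrite expn_gt0.
- by rewrite sumnE big_map in qf_le.
- by nia.
- by nia.
- exact: state_int.
- exact: state_le.
- exact: state_one.
- by move=> i j; rewrite scoreE odd_sub_even_neq0.
- exact: state_le.
move=> i d; rewrite !mxE updateE /selected_sum; congr (_ + _ * (_ * _)).
by apply: eq_big => j; rewrite ?scoreE ?odd_sub_even_gt0 ?mxE.
Qed.

Lemma sum_ord_lt_const q (v : R) : (q <= m)%N -> \sum_(j < m | (j < q)%N) v = v *+ q.
Proof. by move=> q_le; rewrite (big_ord_narrow q_le) sumr_const card_ord. Qed.

Lemma len_layerE : layer_apply (2 * a) len_layer (state 0) = state 1.
Proof.
apply: (state_step 0 (fun _ _ => 0%N) (fun _ _ => 0%N)) => // [i j|i d].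
  by rewrite /score /qform big_cons big_nil !mxE /state_entry /=; ring.
by case9 d; rewrite ?mul0r ?addr0 // /state_entry /= leqnn sumr_const card_ord; ring.
Qed.

Lemma last_layerE : layer_apply (2 * a) last_layer (state 1) = state 2.
Proof.
apply: (state_step 1 (fun _ j => j.+1) (fun _ _ => m)) => // [i j|i d].
  by rewrite /score /qform !big_cons big_nil !mxE /state_entry /=; ring.
case9 d; rewrite ?mul0r ?addr0 // /state_entry /= add0r !mul1r (big_pred1 ord_max) //.
move=> j /=; rewrite ltnS; apply/idP/eqP => [k_le|-> //].
by apply: val_inj => /=; have := ltn_ord j; lia.
Qed.

Lemma prefix_layerE : layer_apply (2 * a) prefix_layer (state 2) = state 3.
Proof.
apply: (state_step 2 (fun i _ => i.+1) (fun _ j => j.+1)) => // [i j|i d].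
  by rewrite /score /qform !big_cons big_nil !mxE /state_entry /=; ring.
case9 d; rewrite ?mul0r ?addr0 // /state_entry /= add0r !mul1r.
by rewrite sum_ord_lt_const // natrM mulr_natl.
Qed.

Lemma count_layerE t : (t < 6)%N ->
  layer_apply (2 * a) (count_layer t) (state t.+3) = state t.+4.
Proof.
move=> t_lt.
apply: (state_step t.+3 triple (fun _ _ => threshold t)) => [|||i j|i d].
- by [].
- exact: absz_sign.
- by rewrite /= absz_sign abszN; lia.
- rewrite /score /qform !big_cons big_nil !mxE /state_entry /= /triple /threshold.
  by rewrite intr_sign -signr_odd; case: (odd t) => /=; ring.
have [no_total no_totalS] : (10 <= t.+3)%N = false /\ (10 <= t.+4)%N = false by split; lia.
have [no_floor no_floorS] : (11 <= t.+3)%N = false /\ (11 <= t.+4)%N = false by split; lia.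
case9 d; rewrite ?mul0r ?addr0 // /state_entry /= ?no_total ?no_totalS ?no_floor ?no_floorS //.
rewrite !subSS !subn0 !(minn_idPl _) ?(ltnW t_lt) // /alt_count big_ord_recr /=.
by rewrite mul1r intr_sign /count_from natr_sum.
Qed.

Lemma alt_count6E i : alt_count 6 i = (\sum_(j | triple i j %% m == 0) 1)%N%:R.
Proof.
have ind (b : bool) : (if b then 1%:R else 0 : R) = b%:R by case: b.
rewrite natr_sum big_mkcond /alt_count /=.
under eq_bigr => t _ do rewrite /count_from natr_sum big_mkcond mulr_sumr /=.
rewrite exchange_big /=; apply: eq_bigr => j _.
rewrite ind (@mod_eq0_alternating R m (triple i j) (ltn0Sn k)); last first.
  by rewrite /triple; have := x_lt i; have := x_lt j; have := x_lt ord_max; lia.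
by apply: eq_bigr => t _; rewrite ind.
Qed.

Lemma total_layerE : layer_apply (2 * a) total_layer (state 9) = state 10.
Proof.
apply: (state_step 9 (fun _ _ => 0%N) (fun _ _ => 0%N)) => // [i j|i d].
  by rewrite /score /qform big_cons big_nil !mxE /state_entry /=; ring.
case9 d; rewrite ?mul0r ?addr0 // /state_entry /= leqnn add0r !mul1r.
rewrite (_ : minn (9 - 3) 6 = 6) // /ntriples natr_sum.
by apply: eq_bigr => j _; rewrite alt_count6E.
Qed.

Lemma floor_layerE : layer_apply (2 * a) floor_layer (state 10) = state 11.
Proof.
apply: (state_step 10 (fun _ _ => ntriples) (fun _ j => j.+1 * m)%N) => // [i j|i d].
  by rewrite /score /qform !big_cons big_nil !mxE /state_entry /=; ring.
case9 d; rewrite ?mul0r ?addr0 // /state_entry /= add0r !mul1r.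
rewrite (eq_bigl (fun j : 'I_m => (j < ntriples %/ m)%N)) => [|j]; last first.
  by rewrite /= leq_divRL.
have quot_le : (ntriples %/ m <= m)%N.
  by rewrite -ltnS ltn_divLR //; have := ntriples_le; nia.
by rewrite sum_ord_lt_const // natrM mulr_natr.
Qed.

Lemma m_le_scale : (m <= 2 ^ (2 * a))%N.
Proof.
have : (2 ^ a <= 2 ^ (2 * a))%N by rewrite leq_exp2l //; lia.
nia.
Qed.

Lemma embed_tc : embed (2 * a) tc_transformer x = state 0.
Proof.
have lt_scale n : (n < m)%N -> (n <= 2 ^ (2 * a))%N.
  by move=> n_lt; apply: leq_trans m_le_scale; apply: ltnW.
apply/matrixP => i d; rewrite !mxE /= !(minn_idPl (lt_scale _ _)) //.
rewrite /state_entry; case9 d; rewrite ?addr0 ?add0r ?[alt_count _ _]big_ord0.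
all: rewrite rnd_id ?rpred_nat ?rpred1 ?rpred0 // ?normr0 ?normr1 ?ler0n ?ler1n ?expn_gt0 //.
all: by rewrite normr_nat ler_nat lt_scale.
Qed.

Lemma final_states_tc : final_states (2 * a) tc_transformer x = state 11.
Proof.
rewrite /final_states embed_tc /= len_layerE last_layerE prefix_layerE.
by rewrite !count_layerE // total_layerE floor_layerE.
Qed.

Lemma ntriples_card :
  #|[set ij : 'I_m * 'I_m | ((x ij.1 + x ij.2 + xl) %% m == 0)%N]| = ntriples.
Proof. by rewrite /ntriples pair_big_dep /= -sum1_card; apply: eq_bigl => ij; rewrite inE. Qed.

Lemma eval_last_tc : eval_last (2 * a) tc_transformer x = (fTC x)%:R.
Proof.
rewrite /eval_last final_states_tc /= addr0 !mxE.
rewrite (bigD1 total_coord) // (bigD1 floor_coord) // big1 /=; last first.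
  by move=> d /andP[]; rewrite !mxE; case9 d => // _ _; rewrite mulr0.
rewrite !mxE /state_entry /= mulr1 addr0 mulrN1 /fTC ntriples_card.
have -> : (ntriples%:R - (m * (ntriples %/ m))%:R : R) = (ntriples %% m)%:R.
  by apply/eqP; rewrite subr_eq -natrD eqr_nat mulnC addnC -divn_eq.
rewrite rnd_id ?rpred_nat // normr_nat ler_nat.
exact: leq_trans (ltnW (ltn_pmod _ (ltn0Sn k))) m_le_scale.
Qed.

End Construction.

Theorem lemma2 (R : realType) :
  exists C : nat,
  forall n : nat,
  exists (p D H dh W : nat),
    [/\ (p <= C * (trunc_log 2 n).+1)%N,
        (D <= C)%N, (H <= C)%N, (dh <= C)%N & (W <= C)%N] /\
    exists T : transformer R D H dh W,
      (nlayers T <= C)%N /\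
      params_representable p T /\
      forall (k : nat), (k < n)%N ->
      forall x : 'I_k.+1 -> nat, (forall i, (x i < k.+1)%N) ->
        eval_last p T x = (fTC x)%:R.
Proof.
exists 16%N => n; set t := (trunc_log 2 n).+1.
have n_lt : (n < 2 ^ t)%N by apply: trunc_log_ltn.
have scaleE : (2 ^ (2 * t + 6) = 2 ^ t * 2 ^ t * 64)%N by rewrite mul2n -addnn !expnD.
have pow_gt0 : (0 < 2 ^ t)%N by rewrite expn_gt0.
exists (2 * (2 * t + 6))%N, 9%N, 1%N, 2%N, 0%N; split; first by split=> //; lia.
exists (tc_transformer R (2 * t + 6)); split=> //; split.
  by apply: params_representable_tc; rewrite scaleE; nia.
by move=> k k_lt x x_lt; apply: eval_last_tc; rewrite // scaleE; nia.
Qed.
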